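(* Consider the $64$ constraints (subsets of the six conditions $C_{in}^{\rightarrow},C_{in}^{\leftarrow},C_{out}^{\rightarrow},C_{out}^{\leftarrow},C_{undec}^{\rightarrow},C_{undec}^{\leftarrow}$). Then: (a) every constraint of cardinality $0$, $1$ or $2$ is weak; (b) among the $20$ constraints of cardinality $3$, exactly $\{C_{in}^{\rightarrow},C_{out}^{\rightarrow},C_{undec}^{\rightarrow}\}$ and $\{C_{in}^{\leftarrow},C_{out}^{\leftarrow},C_{undec}^{\leftarrow}\}$ are correct and non-redundant, and the other $18$ are weak; (c) among the $15$ constraints of cardinality $4$, $\{C_{in}^{\rightarrow},C_{in}^{\leftarrow},C_{out}^{\rightarrow},C_{out}^{\leftarrow}\}$, $\{C_{out}^{\rightarrow},C_{out}^{\leftarrow},C_{undec}^{\rightarrow},C_{undec}^{\leftarrow}\}$ and $\{C_{in}^{\rightarrow},C_{in}^{\leftarrow},C_{undec}^{\rightarrow},C_{undec}^{\leftarrow}\}$ are correct and non-redundant, the six constraints $\{C_{undec}^{\rightarrow},C_{undec}^{\leftarrow},C_{in}^{\rightarrow},C_{out}^{\leftarrow}\}$, $\{C_{undec}^{\rightarrow},C_{undec}^{\leftarrow},C_{in}^{\leftarrow},C_{out}^{\rightarrow}\}$, $\{C_{out}^{\rightarrow},C_{out}^{\leftarrow},C_{in}^{\rightarrow},C_{undec}^{\leftarrow}\}$, $\{C_{out}^{\rightarrow},C_{out}^{\leftarrow},C_{in}^{\leftarrow},C_{undec}^{\rightarrow}\}$, $\{C_{in}^{\rightarrow},C_{in}^{\leftarrow},C_{out}^{\rightarrow},C_{undec}^{\leftarrow}\}$,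 $\{C_{in}^{\rightarrow},C_{in}^{\leftarrow},C_{out}^{\leftarrow},C_{undec}^{\rightarrow}\}$ are weak, and the remaining $6$ are redundant; (d) every constraint of cardinality $5$ or $6$ is redundant.
   Context: An argumentation framework is a pair $(\mathcal{A},\mathcal{R})$ with $\mathcal{A}$ a finite set of arguments and $\mathcal{R}\subseteq\mathcal{A}\times\mathcal{A}$ (self-attacks allowed); $a^{-}=\{b:(b,a)\in\mathcal{R}\}$. For a total function $\mathcal{L}ab:\mathcal{A}\to\{\mathtt{in},\mathtt{out},\mathtt{undec}\}$ and an argument $a$, define the six conditions: $C_{in}^{\rightarrow}$: $\mathcal{L}ab(a)=\mathtt{in}\Rightarrow \forall b\in a^-\ \mathcal{L}ab(b)=\mathtt{out}$; $C_{in}^{\leftarrow}$: $(\forall b\in a^-\ \mathcal{L}ab(b)=\mathtt{out})\Rightarrow \mathcal{L}ab(a)=\mathtt{in}$; $C_{out}^{\rightarrow}$: $\mathcal{L}ab(a)=\mathtt{out}\Rightarrow \exists b\in a^-\ \mathcal{L}ab(b)=\mathtt{in}$; $C_{out}^{\leftarrow}$: $(\exists b\in a^-\ \mathcal{L}ab(b)=\mathtt{in})\Rightarrow \mathcal{L}ab(a)=\mathtt{out}$; $C_{undec}^{\rightarrow}$: $\mathcal{L}ab(a)=\mathtt{undec}\Rightarrow (\forall b\in a^-\ \mathcal{L}ab(b)\neq\mathtt{in}\ \wedge\ \exists c\in a^-\ \mathcal{L}ab(c)=\mathtt{undec})$; $C_{undec}^{\leftarrow}$: $(\forall b\in a^-\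 \mathcal{L}ab(b)\neq\mathtt{in}\ \wedge\ \exists c\in a^-\ \mathcal{L}ab(c)=\mathtt{undec})\Rightarrow \mathcal{L}ab(a)=\mathtt{undec}$. $\mathcal{L}ab$ is a complete labelling iff it satisfies all six conditions for every $a\in\mathcal{A}$. A constraint is any subset of these six conditions; a labelling satisfies a constraint if it satisfies each condition in it for every argument. A constraint is: weak if there exist a finite argumentation framework and a total labelling satisfying it that is not complete; correct if, for every finite argumentation framework, the total labellings satisfying it are exactly the complete labellings; correct and non-redundant if it is correct and every strict subset of it is weak; redundant if it is correct and some strict subset of it is correct. *)

From HB Require Import structures.
From mathcomp Require Import all_boot.
Set Implicit Arguments. Unset Strict Implicit. Unset Printing Implicit Defensive.

Inductive label := In | Out | Undec.

Definition is_in (l : label) : bool := if l is In then true else false.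
Definition is_out (l : label) : bool := if l is Out then true else false.
Definition is_undec (l : label) : bool := if l is Undec then true else false.

Inductive cond := CinF | CinB | CoutF | CoutB | CundecF | CundecB.
(* CinF = C_in^->, CinB = C_in^<-, etc. *)

Definition cond_to (c : cond) : 'I_6 :=
  match c with
  | CinF => @Ordinal 6 0 isT | CinB => @Ordinal 6 1 isT
  | CoutF => @Ordinal 6 2 isT | CoutB => @Ordinal 6 3 isT
  | CundecF => @Ordinal 6 4 isT | CundecB => @Ordinal 6 5 isT
  end.
Definition cond_of (i : 'I_6) : cond :=
  match val i with
  | 0 => CinF | 1 => CinB | 2 => CoutF | 3 => CoutB | 4 => CundecF | _ => CundecB
  end.
Lemma cond_toK : cancel cond_to cond_of. Proof. by case. Qed.
HB.instance Definition _ := Finite.copy cond (can_type cond_toK).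

(* An argumentation framework: a finite type T of arguments with attack
   relation R (R b a means b attacks a); a total labelling Lab : T -> label. *)
Section Conds.
Variables (T : finType) (R : rel T) (Lab : T -> label).

Definition holds (c : cond) (a : T) : bool :=
  match c with
  | CinF => is_in (Lab a) ==> [forall b, R b a ==> is_out (Lab b)]
  | CinB => [forall b, R b a ==> is_out (Lab b)] ==> is_in (Lab a)
  | CoutF => is_out (Lab a) ==> [exists b, R b a && is_in (Lab b)]
  | CoutB => [exists b, R b a && is_in (Lab b)] ==> is_out (Lab a)
  | CundecF => is_undec (Lab a) ==>
      ([forall b, R b a ==> ~~ is_in (Lab b)] && [exists c, R c a && is_undec (Lab c)])
  | CundecB =>
      ([forall b, R b a ==> ~~ is_in (Lab b)] && [exists c, R c a && is_undec (Lab c)])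
      ==> is_undec (Lab a)
  end.

Definition complete : Prop := forall a : T, forall c : cond, holds c a.

Definition satisfies (C : {set cond}) : Prop :=
  forall c, c \in C -> forall a : T, holds c a.
End Conds.

Definition weak (C : {set cond}) : Prop :=
  exists (T : finType) (R : rel T) (Lab : T -> label),
    satisfies R Lab C /\ ~ complete R Lab.

Definition correct (C : {set cond}) : Prop :=
  forall (T : finType) (R : rel T) (Lab : T -> label),
    satisfies R Lab C <-> complete R Lab.

Definition correct_nonredundant (C : {set cond}) : Prop :=
  correct C /\ forall D : {set cond}, D \proper C -> weak D.

Definition redundant (C : {set cond}) : Prop :=
  correct C /\ exists D : {set cond}, D \proper C /\ correct D.

From HB Require Import structures.
From mathcomp Require Import all_boot.
Set Implicit Arguments. Unset Strict Implicit. Unset Printing Implicit Defensive.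

(* Whether an argument [a] satisfies a condition depends only on its label and on
   its "verdict": the label [In]/[Out]/[Undec] that the complete semantics
   prescribes from the labels of its attackers (all out / some in / otherwise).
   A condition is a local test [local c l v] on a pair (label, verdict), and a
   mismatched pair [l <> v] violates exactly the two conditions [forward l]
   (= C_l^->) and [backward v] (= C_v^<-): the six conditions and the six
   mismatched pairs form a hexagon.  Hence a constraint [C] is correct as soon as
   it contains an end of every such edge ([covers C]); conversely an uncovered
   edge is realised by a three-argument framework in which only the target
   argument is mislabelled, so [C] is weak.  Correct-and-non-redundant
   constraints are then the minimal covers, redundant ones the non-minimal
   covers, and the statement reduces to a finite computation on the 64 subsets
   of the six conditions, enumerated as subsequences of a fixed listing. *)

Definition nat_of_label (l : label) : nat :=
  match l with In => 0 | Out => 1 | Undec => 2 end.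
Definition label_of_nat (n : nat) : label :=
  match n with 0 => In | 1 => Out | _ => Undec end.
Lemma nat_of_labelK : cancel nat_of_label label_of_nat. Proof. by case. Qed.
HB.instance Definition _ := Equality.copy label (can_type nat_of_labelK).

Definition labels : seq label := [:: In; Out; Undec].
Lemma mem_labels l : l \in labels. Proof. by case: l. Qed.

Definition forward (l : label) : cond :=
  match l with In => CinF | Out => CoutF | Undec => CundecF end.
Definition backward (l : label) : cond :=
  match l with In => CinB | Out => CoutB | Undec => CundecB end.

Definition local (c : cond) (l v : label) : bool :=
  match c with
  | CinF => (l == In) ==> (v == In)
  | CinB => (v == In) ==> (l == In)
  | CoutF => (l == Out) ==> (v == Out)
  | CoutB => (v == Out) ==> (l == Out)
  | CundecF => (l == Undec) ==> (v == Undec)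
  | CundecB => (v == Undec) ==> (l == Undec)
  end.

Lemma local_fails c l v :
  ~~ local c l v = (l != v) && ((c == forward l) || (c == backward v)).
Proof. by case: c; case: l; case: v. Qed.

Lemma local_refl c l : local c l l.
Proof. by apply/negPn; rewrite local_fails eqxx. Qed.

Section Verdict.
Variables (T : finType) (R : rel T) (Lab : T -> label).

Definition verdict (a : T) : label :=
  if [forall b, R b a ==> is_out (Lab b)] then In
  else if [exists b, R b a && is_in (Lab b)] then Out else Undec.

Lemma verdict_spec a :
  [/\ [forall b, R b a ==> is_out (Lab b)] = (verdict a == In),
      [exists b, R b a && is_in (Lab b)] = (verdict a == Out) &
      [forall b, R b a ==> ~~ is_in (Lab b)] && [exists c, R c a && is_undec (Lab c)]
        = (verdict a == Undec)].
Proof.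
rewrite /verdict; have [all_out|] := boolP [forall b, R b a ==> is_out (Lab b)].
  have no_attacker (P : label -> bool) : ~~ P Out -> ~~ [exists b, R b a && P (Lab b)].
    move=> nPout; apply/existsP => -[b /andP [Rba]].
    by move/forallP/(_ b): all_out; rewrite Rba; case: (Lab b) nPout => //= /negP nP _ /nP.
  by rewrite (negbTE (no_attacker is_in isT)) (negbTE (no_attacker is_undec isT)) andbF.
rewrite negb_forall => /existsP [b]; rewrite negb_imply => /andP [Rba not_out].
have [/existsP [c /andP [Rca in_c]] | /existsP no_in] :=
  boolP [exists b, R b a && is_in (Lab b)].
  rewrite (_ : [forall b, R b a ==> ~~ is_in (Lab b)] = false) //.
  by apply/negbTE/negP => /forallP/(_ c); rewrite Rca in_c.
have -> : [forall b, R b a ==> ~~ is_in (Lab b)].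
  apply/forallP => c; apply/implyP => Rca; apply/negP => in_c.
  by apply: no_in; exists c; rewrite Rca.
have -> // : [exists c, R c a && is_undec (Lab c)].
apply/existsP; exists b; rewrite Rba /=.
by case lab_b: (Lab b) not_out => // _; case: no_in; exists b; rewrite Rba lab_b.
Qed.

Lemma holds_local c a : holds R Lab c a = local c (Lab a) (verdict a).
Proof.
case: (verdict_spec a) => all_out some_in undec.
by case: c; rewrite /= ?all_out ?some_in ?undec; case: (Lab a).
Qed.

Lemma verdict_unattacked a : (forall b, ~~ R b a) -> verdict a = In.
Proof.
move=> unattacked; apply/eqP; case: (verdict_spec a) => <- _ _.
by apply/forallP => b; rewrite (negbTE (unattacked b)).
Qed.

Lemma verdict_in_attacker a b : R b a -> Lab b = In -> verdict a = Out.
Proof.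
move=> Rba in_b; apply/eqP; case: (verdict_spec a) => _ <- _.
by apply/existsP; exists b; rewrite Rba in_b.
Qed.

Lemma verdict_undec_attacker a b :
  R b a -> Lab b = Undec -> (forall c, R c a -> Lab c = Undec) -> verdict a = Undec.
Proof.
move=> Rba undec_b only_undec; apply/eqP; case: (verdict_spec a) => _ _ <-.
apply/andP; split; first by apply/forallP => c; apply/implyP => /only_undec ->.
by apply/existsP; exists b; rewrite Rba undec_b.
Qed.

End Verdict.

Section Witness.
Variables (l v : label).

(* A framework whose target [None] has label [l] and verdict [v]: [Some true]
   is an unattacked [In] argument, [Some false] a self-attacking [Undec]
   argument, and the target is attacked by the one matching [v] (if any). *)
Definition witness_attacks (x y : option bool) : bool :=
  match x, y with
  | Some false, Some false => true
  | Some true, None => v == Out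
  | Some false, None => v == Undec
  | _, _ => false
  end.

Definition witness_label (x : option bool) : label :=
  if x is Some b then (if b then In else Undec) else l.

Lemma witness_verdict x :
  verdict witness_attacks witness_label x = if x is None then v else witness_label x.
Proof.
case: x => [[]|].
- by apply: verdict_unattacked => -[[]|].
- by apply: (verdict_undec_attacker (b := Some false)) => // -[[]|].
case ve: v.
- by apply: verdict_unattacked => -[[]|]; rewrite /= ?ve.
- by apply: (verdict_in_attacker (b := Some true)); rewrite /= ?ve.
- by apply: (verdict_undec_attacker (b := Some false)) => [||[[]|]]; rewrite /= ?ve.
Qed.

End Witness.

Lemma weak_of_uncovered (C : {set cond}) l v :
  l != v -> forward l \notin C -> backward v \notin C -> weak C.
Proof.
move=> lv fC bC; exists _, (witness_attacks v), (witness_label l); split.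
  move=> c cC x; rewrite holds_local witness_verdict; case: x => [b|]; first exact: local_refl.
  apply/negPn; rewrite local_fails lv /=.
  by apply/negP => /orP [] /eqP cE; rewrite -cE cC in fC bC.
move/(_ None (forward l)); rewrite holds_local witness_verdict.
by apply/negP; rewrite local_fails lv eqxx.
Qed.

Definition covers (pT : predType cond) (C : pT) : bool :=
  all (fun l =>
    all (fun v => (l == v) || (forward l \in C) || (backward v \in C)) labels) labels.

Lemma eq_covers (pT1 pT2 : predType cond) (C1 : pT1) (C2 : pT2) :
  C1 =i C2 -> covers C1 = covers C2.
Proof.
by move=> eqC; apply: eq_all => l; apply: eq_all => v; rewrite !eqC.
Qed.

Lemma correct_of_covers (C : {set cond}) : covers C -> correct C.
Proof.
move=> covC T R Lab; split => [sat a c | compl c _ a]; last exact: compl.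
suff match_verdict : Lab a = verdict R Lab a by rewrite holds_local match_verdict local_refl.
apply/eqP; apply: contraT => neq.
have := allP (allP covC _ (mem_labels (Lab a))) _ (mem_labels (verdict R Lab a)).
rewrite (negbTE neq) /= => /orP [] cC; move: (sat _ cC a);
  by rewrite holds_local -[local _ _ _]negbK local_fails neq eqxx ?orbT.
Qed.

Lemma weak_of_not_covers (C : {set cond}) : ~~ covers C -> weak C.
Proof.
case/allPn => l _ /allPn [v _]; rewrite !negb_or => /andP [/andP [lv fC] bC].
exact: weak_of_uncovered lv fC bC.
Qed.

Definition conds : seq cond := [:: CinF; CinB; CoutF; CoutB; CundecF; CundecB].

Lemma mem_conds c : c \in conds. Proof. by case: c. Qed.

Definition listing (C : {set cond}) : seq cond := [seq c <- conds | c \in C].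

Lemma mem_listing (C : {set cond}) : listing C =i C.
Proof. by move=> c; rewrite mem_filter mem_conds andbT. Qed.

Lemma card_listing (C : {set cond}) : #|C| = size (listing C).
Proof.
rewrite -(card_uniqP (filter_uniq _ (isT : uniq conds))).
by apply: eq_card => c; rewrite mem_listing.
Qed.

Lemma eq_listing (C D : {set cond}) : (C == D) = (listing C == listing D).
Proof.
apply/eqP/eqP => [-> // | eqCD].
by apply/setP => c; rewrite -!mem_listing eqCD.
Qed.

Fixpoint sublists (T : Type) (s : seq T) : seq (seq T) :=
  if s is x :: s' then [seq x :: t | t <- sublists s'] ++ sublists s' else [:: [::]].

Lemma sublists_subseq (T : eqType) (s t : seq T) : subseq t s -> t \in sublists s.
Proof.
elim: s t => [|x s IHs] [|y t] //=; rewrite mem_cat.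
  by rewrite IHs ?orbT ?sub0seq.
by case: eqP => [-> /IHs/(map_f (cons x)) -> | _ /IHs ->]; rewrite ?orbT.
Qed.

Lemma listing_sublists (C : {set cond}) : listing C \in sublists conds.
Proof. exact/sublists_subseq/filter_subseq. Qed.

Definition included (t s : seq cond) : bool := all (fun c => c \in s) t.

Lemma subset_included (D C : {set cond}) t s :
  t =i D -> s =i C -> (D \subset C) = included t s.
Proof.
move=> eqD eqC; apply/subsetP/allP => [DC c | ts c].
  by rewrite eqD eqC; apply: DC.
by rewrite -eqD -eqC; apply: ts.
Qed.

Definition minimal (s : seq cond) : bool :=
  covers s && all (fun t => included t s && ~~ included s t ==> ~~ covers t) (sublists conds).

Lemma cnr_of_minimal (C : {set cond}) : minimal (listing C) -> correct_nonredundant C.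
Proof.
rewrite /minimal (eq_covers (mem_listing C)) => /andP [covC /allP minC]; split.
  exact: correct_of_covers.
move=> D; rewrite properE !(subset_included (mem_listing _) (mem_listing _)) => DC.
apply: weak_of_not_covers; rewrite -(eq_covers (mem_listing D)).
exact: implyP (minC _ (listing_sublists D)) DC.
Qed.

Lemma redundant_of_not_minimal (C : {set cond}) :
  covers C -> ~~ minimal (listing C) -> redundant C.
Proof.
rewrite /minimal (eq_covers (mem_listing C)) => covC; rewrite covC => /allPn [t _].
rewrite negb_imply negbK => /andP [tC covt].
have eq_t : t =i [set c in t] by move=> c; rewrite inE.
split; first exact: correct_of_covers.
exists [set c in t]; split; last by apply: correct_of_covers; rewrite -(eq_covers eq_t).
rewrite properE (subset_included eq_t (mem_listing C)).
by rewrite (subset_included (mem_listing C) eq_t).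
Qed.

(* Covers and minimality are decided by evaluation, not by simplification. *)
Arguments covers : simpl never.
Arguments minimal : simpl never.

Lemma classification (C : {set cond}) :
  [&& (#|C| <= 2) ==> ~~ covers C,
      (#|C| == 3) ==>
        (((C == [set CinF; CoutF; CundecF]) || (C == [set CinB; CoutB; CundecB]))
           ==> minimal (listing C)) &&
        ((C != [set CinF; CoutF; CundecF]) ==> (C != [set CinB; CoutB; CundecB])
           ==> ~~ covers C),
      (#|C| == 4) ==>
        let CNR := [:: [set CinF; CinB; CoutF; CoutB];
                       [set CoutF; CoutB; CundecF; CundecB];
                       [set CinF; CinB; CundecF; CundecB]] in
        let W := [:: [set CundecF; CundecB; CinF; CoutB];
                     [set CundecF; CundecB; CinB; CoutF];
                     [set CoutF; CoutB; CinF; CundecB];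
                     [set CoutF; CoutB; CinB; CundecF];
                     [set CinF; CinB; CoutF; CundecB];
                     [set CinF; CinB; CoutB; CundecF]] in
        [&& (C \in CNR) ==> minimal (listing C),
            (C \in W) ==> ~~ covers C &
            (C \notin CNR) ==> (C \notin W) ==> covers C && ~~ minimal (listing C)] &
      (5 <= #|C|) ==> covers C && ~~ minimal (listing C)].
Proof.
rewrite card_listing -(eq_covers (mem_listing C)) /= !inE !eq_listing.
move: (listing_sublists C); set s := listing C; clearbody s => s_sub.
rewrite /listing !filter_mask; cbn [map conds]; rewrite !(in_setU, in_set1) /=.
by move: s s_sub; apply/allP; vm_compute.
Qed.

Theorem corollary1 :
  forall C : {set cond},
  (* (a) *)
  ((#|C| <= 2)%N -> weak C) /\
  (* (b) *)
  (#|C| = 3 ->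
     ((C = [set CinF; CoutF; CundecF] \/ C = [set CinB; CoutB; CundecB]) ->
        correct_nonredundant C) /\
     (C <> [set CinF; CoutF; CundecF] -> C <> [set CinB; CoutB; CundecB] -> weak C)) /\
  (* (c) *)
  (#|C| = 4 ->
     let CNR := [:: [set CinF; CinB; CoutF; CoutB];
                    [set CoutF; CoutB; CundecF; CundecB];
                    [set CinF; CinB; CundecF; CundecB]] in
     let W := [:: [set CundecF; CundecB; CinF; CoutB];
                  [set CundecF; CundecB; CinB; CoutF];
                  [set CoutF; CoutB; CinF; CundecB];
                  [set CoutF; CoutB; CinB; CundecF];
                  [set CinF; CinB; CoutF; CundecB];
                  [set CinF; CinB; CoutB; CundecF]] in
     (C \in CNR -> correct_nonredundant C) /\
     (C \in W -> weak C) /\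
     (C \notin CNR -> C \notin W -> redundant C)) /\
  (* (d) *)
  ((5 <= #|C|)%N -> redundant C).
Proof.
move=> C; case/and4P: (classification C) => small size3 size4 large.
split; first by move/(implyP small)/weak_of_not_covers.
split.
  move/eqP=> card3; move: size3; rewrite card3 => /andP [AB notAB]; split.
    by case=> /eqP CE; apply/cnr_of_minimal/(implyP AB); rewrite CE ?orbT.
  move=> /eqP nA /eqP nB; exact/weak_of_not_covers/(implyP (implyP notAB nA) nB).
split; last by move=> /(implyP large)/andP [covC nmin]; exact: redundant_of_not_minimal.
move/eqP=> card4; move: size4; rewrite card4 /= => /and3P [inCNR inW others]; split.
  by move/(implyP inCNR)/cnr_of_minimal.
split; first by move/(implyP inW)/weak_of_not_covers.
move=> nCNR nW; case/andP: (implyP (implyP others nCNR) nW).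
exact: redundant_of_not_minimal.
Qed.
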